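(* Let $3 \leq r \leq s \leq t$ be integers. Then for sufficiently large $n$, \[ \mathrm{ex}_r ( n , \textup{Berge-}K_{s,t} ) = O \big( n^{ r - \frac{r (r - 1) }{2s} } \big), \] where the implied constant depends only on $r,s,t$.
   Context: A hypergraph $H$ is a Berge-$F$ (for a graph $F$) if there is a bijection $f : E(F) \to E(H)$ with $e \subseteq f(e)$ for every $e \in E(F)$. $\mathrm{ex}_r(n,\textup{Berge-}F)$ is the maximum number of edges in an $n$-vertex $r$-uniform hypergraph containing no subhypergraph that is a Berge-$F$. *)

From mathcomp Require Import all_boot.
Set Implicit Arguments.
Unset Strict Implicit.
Unset Printing Implicit Defensive.

Definition uniform (r n : nat) (H : {set {set 'I_n}}) : bool :=
  [forall e in H, #|e| == r].

(* A graph F is given by a finite vertex type V and an edge set E of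
   2-element subsets of V. *)
Definition has_berge (V : finType) (E : {set {set V}}) (n : nat)
    (H : {set {set 'I_n}}) : bool :=
  [exists phi : {ffun V -> 'I_n}, exists g : {ffun {set V} -> {set 'I_n}},
     [&& injectiveb phi, dinjectiveb g E,
         [forall e in E, g e \in H] &
         [forall e in E, (phi @: e) \subset g e]]].

Definition ex_berge (r : nat) (V : finType) (E : {set {set V}}) (n : nat) : nat :=
  \max_(H : {set {set 'I_n}} | uniform r H && ~~ has_berge E H) #|H|.

Definition Kst_edges (s t : nat) : {set {set ('I_s + 'I_t)%type}} :=
  [set [set inl i; inr j] | i : 'I_s, j : 'I_t].

From HB Require Import structures.
From mathcomp Require Import all_boot zify.
From Stdlib Require Import Reals Lra.
(* Reals rebinds the nat_scope notations to Peano arithmetic; restore ssrnat's. *)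
Import ssrnat.

(* Call a pair of vertices fat if at least st hyperedges contain it.  A K_{s,t} of fat
   pairs blows up greedily into a Berge-K_{s,t}, so the fat pairs form a K_{s,t}-free
   graph.  So do the pairs obtained by choosing one non-fat pair in every hyperedge that
   is not a fat clique, since distinct chosen pairs come from distinct hyperedges.  Each
   hyperedge is thus an r-clique of the first graph or one of fewer than st hyperedges
   through an edge of the second one.
   By Alon and Shikhelman, a K_{s,t}-free graph on N vertices has O(N^(m - m(m-1)/2s))
   m-cliques: an (m+1)-clique is a vertex v with an m-clique of its neighbourhood, which
   is K_{s-1,t}-free, and the inductive bounds d(v)^a are summed by concavity of
   x |-> x^(a/s) against the Kovari-Sos-Turan estimate sum_v d(v)^s = O(N^s). *)

Set Implicit Arguments.
Unset Strict Implicit.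
Unset Printing Implicit Defensive.

Lemma card_bigcup_le (T I : finType) (P : pred I) (F : I -> {set T}) :
  #|\bigcup_(i | P i) F i| <= \sum_(i | P i) #|F i|.
Proof.
apply: (big_ind2 (fun (A : {set T}) k => #|A| <= k)) => [|A k B l hA hB|//].
  by rewrite cards0.
by apply: leq_trans (leq_card_setU A B) _; apply: leq_add.
Qed.

Lemma double_counting (I J : finType) (A : {set I}) (B : {set J}) (R : I -> J -> bool) :
  \sum_(i in A) #|[set j in B | R i j]| = \sum_(j in B) #|[set i in A | R i j]|.
Proof.
have cardE (K : finType) (C : {set K}) (P : pred K) :
    #|[set k in C | P k]| = \sum_(k in C) P k.
  rewrite -sum1_card big_mkcond [RHS]big_mkcond /=.
  by apply: eq_bigr => k _; rewrite inE; case: (k \in C); case: (P k).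
under eq_bigr do rewrite cardE.
by rewrite exchange_big; apply: eq_bigr => j _; rewrite cardE.
Qed.

Lemma exists_subset_card (T : finType) (B : {set T}) k :
  k <= #|B| -> exists2 B' : {set T}, B' \subset B & #|B'| = k.
Proof.
rewrite -bin_gt0 -cards_draws => /card_gt0P [B' /setIdP [B'B /eqP cardB']].
by exists B'.
Qed.

Lemma distinct_representatives (X Y : finType) (y0 : Y) (S : X -> {set Y}) (I : {set X}) :
  {in I, forall i, #|I| <= #|S i|} ->
  exists2 g : X -> Y, {in I, forall i, g i \in S i} & {in I &, injective g}.
Proof.
have [m] := ubnP #|I|; elim: m I => // m IH I /ltnSE cardI large.
have [-> | [i0 i0I]] := set_0Vmem I; first by exists (fun=> y0) => ?; rewrite inE.
have cardI' : #|I :\ i0| < #|I| by rewrite (cardsD1 i0 I) i0I.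
have large' : {in I :\ i0, forall i, #|I :\ i0| <= #|S i|}.
  by move=> i /setD1P [_ iI]; apply: leq_trans (ltnW cardI') (large i iI).
have [g gS g_inj] := IH _ (leq_trans cardI' cardI) large'.
have /subsetPn [y yS yN] : ~~ (S i0 \subset g @: (I :\ i0)).
  apply/negP => /subset_leq_card; apply/negP; rewrite -ltnNge.
  exact: leq_ltn_trans (leq_imset_card _ _) (leq_trans cardI' (large i0 i0I)).
exists (fun x => if x == i0 then y else g x) => [i iI | i j iI jI] /=.
  by case: eqP => [-> // | /eqP ne]; apply: gS; rewrite !inE ne.
have img x : x \in I -> x != i0 -> g x \in g @: (I :\ i0).
  by move=> xI ne; apply: imset_f; rewrite !inE ne.
case: eqP => [-> | /eqP ne1]; case: eqP => [-> // | /eqP ne2].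
- by move=> e; case/negP: yN; rewrite e img.
- by move=> e; case/negP: yN; rewrite -e img.
by apply: g_inj; rewrite !inE ?ne1 ?ne2.
Qed.

Lemma ffact_le_expn d k : d ^_ k <= d ^ k.
Proof. by elim: k => // k IH; rewrite ffactnSr expnSr leq_mul // leq_subr. Qed.

Lemma expn_le_ffact d k : d ^ k <= k ^ k * (d ^_ k + 1).
Proof.
have [kd | dk] := leqP k d; last first.
  apply: leq_trans (_ : k ^ k <= _); last by rewrite leq_pmulr // addn1.
  by case: k dk => // k dk; rewrite leq_exp2r // ltnW.
apply: leq_trans (_ : k ^ k * d ^_ k <= _); last by rewrite leq_mul2l leq_addr orbT.
have prodE x : x ^ k = \prod_(i < k) x by rewrite prod_nat_const card_ord.
rewrite ffact_prod !prodE -big_split /=.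
by apply: leq_prod => i _; have := ltn_ord i; nia.
Qed.

Section Cliques.

Variable T : finType.
Implicit Types (adj : rel T) (A B Q U : {set T}).

Definition clique adj Q := [forall x in Q, forall y in Q, (x != y) ==> adj x y].

Definition cliques adj (m : nat) U :=
  [set Q : {set T} | [&& Q \subset U, #|Q| == m & clique adj Q]].

Definition nbhd adj U v := [set u in U | adj v u].

Definition Kst_free adj (s t : nat) U := forall A B,
  A \subset U -> B \subset U -> #|A| = s -> #|B| = t -> ~ {in A & B, forall a b, adj a b}.

Lemma cliqueP adj Q : reflect {in Q &, forall x y, x != y -> adj x y} (clique adj Q).
Proof.
apply: (iffP forall_inP) => [cl x y xQ yQ | cl x xQ].
  by move/forall_inP/(_ y yQ)/implyP: (cl x xQ).
by apply/forall_inP => y yQ; apply/implyP; apply: cl.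
Qed.

Lemma nbhd_sub adj U v : nbhd adj U v \subset U.
Proof. by apply/subsetP => u /setIdP []. Qed.

Lemma complete_bipartite_disjoint adj A B :
  irreflexive adj -> {in A & B, forall a b, adj a b} -> [disjoint A & B].
Proof.
move=> irr AB; rewrite -setI_eq0; apply/eqP/setP => x; rewrite !inE.
by apply/negbTE/andP => -[xA xB]; move: (AB x x xA xB); rewrite irr.
Qed.

Lemma card_cliques1 adj U : #|cliques adj 1 U| = #|U|.
Proof.
have -> : cliques adj 1 U = set1 @: U.
  apply/setP => Q; rewrite inE; apply/and3P/imsetP => [[QU /cards1P [x Qx] _] | [x xU ->]].
    by exists x; rewrite // -sub1set -Qx.
  by split; rewrite ?sub1set ?cards1 //; apply/cliqueP => y z /set1P -> /set1P ->; rewrite eqxx.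
by rewrite card_imset //; apply: set1_inj.
Qed.

Lemma card_cliquesS_le adj m U :
  #|cliques adj m.+1 U| <= \sum_(v in U) #|cliques adj m (nbhd adj U v)|.
Proof.
pose extend v := (fun Q => v |: Q) @: cliques adj m (nbhd adj U v).
have cover : cliques adj m.+1 U \subset \bigcup_(v in U) extend v.
  apply/subsetP => Q; rewrite inE => /and3P [QU /eqP cardQ /cliqueP clQ].
  have /card_gt0P [v vQ] : 0 < #|Q| by rewrite cardQ.
  apply/bigcupP; exists v; first exact: subsetP QU v vQ.
  apply/imsetP; exists (Q :\ v); last by rewrite setD1K.
  rewrite inE; apply/and3P; split.
  - apply/subsetP => x /setD1P [xv xQ]; rewrite inE (subsetP QU) //=.
    by apply: clQ; rewrite // eq_sym.
  - by have := cardsD1 v Q; rewrite vQ cardQ; lia.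
  - by apply/cliqueP => x y /setD1P [_ xQ] /setD1P [_ yQ]; apply: clQ.
apply: leq_trans (subset_leq_card cover) _.
apply: leq_trans (card_bigcup_le _ _) _.
by apply: leq_sum => v _; apply: leq_imset_card.
Qed.

Lemma Kst_free_nbhd adj s t U v : irreflexive adj -> v \in U ->
  Kst_free adj s.+1 t U -> Kst_free adj s t (nbhd adj U v).
Proof.
move=> irr vU Kfree A B AN BN cardA cardB AB.
have vA : v \notin A by apply/negP => /(subsetP AN); rewrite inE irr andbF.
have BU := subset_trans BN (nbhd_sub adj U v).
apply: (Kfree (v |: A) B _ BU _ cardB).
- by rewrite subUset sub1set vU (subset_trans AN) ?nbhd_sub.
- by rewrite cardsU1 vA cardA.
move=> a b /setU1P [-> | aA] bB; last exact: AB.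
by have /setIdP [] := subsetP BN b bB.
Qed.

Lemma sum_bin_nbhd_le adj s t U : symmetric adj -> Kst_free adj s t U ->
  \sum_(v in U) 'C(#|nbhd adj U v|, s) <= t * 'C(#|U|, s).
Proof.
move=> sym Kfree.
set X := [set S : {set T} | S \subset U & #|S| == s].
have binE v : 'C(#|nbhd adj U v|, s) = #|[set S in X | S \subset nbhd adj U v]|.
  rewrite -cards_draws; apply: eq_card => S; rewrite !inE.
  by case SN: (S \subset _); rewrite ?andbF ?andbT // (subset_trans SN) ?nbhd_sub.
under eq_bigr do rewrite binE.
rewrite double_counting -cards_draws mulnC -sum_nat_const.
apply: leq_sum => S /setIdP [SU /eqP cardS].
rewrite leqNgt; apply/negP => /ltnW /exists_subset_card [B BS cardB].
apply: (Kfree S B SU _ cardS cardB) => [|a b aS bB].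
  by apply: subset_trans BS _; apply/subsetP => v /setIdP [].
have /setIdP [_ /subsetP SN] := subsetP BS b bB.
by have /setIdP [_] := SN a aS; rewrite sym.
Qed.

Definition kst_const s t := s ^ s * (s`! * t + 1).

Lemma sum_nbhd_expn_le adj s t U : 0 < s -> symmetric adj -> Kst_free adj s t U ->
  \sum_(v in U) #|nbhd adj U v| ^ s <= kst_const s t * #|U| ^ s.
Proof.
move=> s_gt0 sym Kfree.
have binN : 'C(#|U|, s) <= #|U| ^ s.
  by apply: leq_trans (ffact_le_expn _ _); rewrite -bin_ffact leq_pmulr ?fact_gt0.
have cardN : #|U| <= #|U| ^ s.
  by case: #|U| => // N; rewrite -{1}(expn1 N.+1) leq_pexp2l.
have sumC := sum_bin_nbhd_le sym Kfree.
apply: leq_trans (_ : \sum_(v in U) s ^ s * (s`! * 'C(#|nbhd adj U v|, s) + 1) <= _).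
  by apply: leq_sum => v _; rewrite [_`! * _]mulnC bin_ffact expn_le_ffact.
have -> : \sum_(v in U) s ^ s * (s`! * 'C(#|nbhd adj U v|, s) + 1)
    = s ^ s * (s`! * \sum_(v in U) 'C(#|nbhd adj U v|, s) + #|U|).
  by rewrite -big_distrr big_split -big_distrr sum_nat_const muln1.
rewrite /kst_const -mulnA leq_mul2l mulnDl mul1n -mulnA leq_add ?orbT //.
by rewrite leq_mul2l (leq_trans sumC) ?orbT // leq_mul2l binN orbT.
Qed.

End Cliques.

HB.instance Definition _ := Monoid.isComLaw.Build R 0%R Rplus
  (fun x y z => esym (Rplus_assoc x y z)) Rplus_comm Rplus_0_l.

Section RealSums.

Local Open Scope R_scope.
Variables (I : finType) (U : {set I}).

Lemma INR_sum (f : I -> nat) :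
  INR (\sum_(v in U) f v) = \big[Rplus/0]_(v in U) INR (f v).
Proof. exact: (big_morph INR plus_INR). Qed.

Lemma rsum_le (F G : I -> R) : (forall v, v \in U -> F v <= G v) ->
  \big[Rplus/0]_(v in U) F v <= \big[Rplus/0]_(v in U) G v.
Proof. by move=> FG; apply: (big_ind2 (fun x y => x <= y)) => // *; lra. Qed.

Lemma rsum_scale (c : R) (F : I -> R) :
  \big[Rplus/0]_(v in U) (c * F v) = c * \big[Rplus/0]_(v in U) F v.
Proof. by symmetry; apply: (big_morph (Rmult c)) => [x y|]; ring. Qed.

Lemma rsum_affine (c dd : R) (F : I -> R) :
  \big[Rplus/0]_(v in U) (c + dd * F v) = INR #|U| * c + dd * \big[Rplus/0]_(v in U) F v.
Proof.
rewrite big_split /= rsum_scale big_const; congr (_ + _).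
by elim: #|U| => [|k IH]; rewrite ?iterS ?IH ?S_INR /=; ring.
Qed.

End RealSums.

Section Powers.

Local Open Scope R_scope.

Lemma INR_expn a b : INR (a ^ b)%N = INR a ^ b.
Proof. by elim: b => [|b IH] //; rewrite expnS mult_INR IH. Qed.

Lemma Rpower_gt0 x y : 0 < Rpower x y.
Proof. exact: exp_pos. Qed.

Lemma Rpower_bernoulli w p : 0 < w -> 1 <= p -> 1 + p * (w - 1) <= Rpower w p.
Proof.
move=> w_gt0 p_ge1.
have ln_ge : 1 - / w <= ln w.
  have := exp_ineq1_le (ln (/ w)).
  rewrite exp_ln ?ln_Rinv; [lra | exact: w_gt0 | exact: Rinv_0_lt_compat].
have pow_ge : 1 + (p - 1) * ln w <= Rpower w (p - 1) by apply: exp_ineq1_le.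
have -> : Rpower w p = w * Rpower w (p - 1).
  by rewrite -{2}(Rpower_1 _ w_gt0) -Rpower_plus; congr Rpower; ring.
have -> : 1 + p * (w - 1) = w * (1 + (p - 1) * (1 - / w)) by field; lra.
by apply: Rmult_le_compat_l; nra.
Qed.

Lemma Rpower_le_tangent z th : 0 < z -> 0 < th <= 1 -> Rpower z th <= 1 + th * (z - 1).
Proof.
move=> z_gt0 th01.
have p_ge1 : 1 <= / th by rewrite -Rinv_1; apply: Rinv_le_contravar; lra.
have := Rpower_bernoulli (Rpower_gt0 z th) p_ge1.
rewrite Rpower_mult Rinv_r ?Rpower_1 //; last lra.
move=> le_z; have : th * (/ th * (Rpower z th - 1)) <= th * (z - 1).
  by apply: Rmult_le_compat_l; lra.
have -> : th * (/ th * (Rpower z th - 1)) = Rpower z th - 1 by field; lra.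
lra.
Qed.

(* [d ^ a] with [0 ^ a = 0], whereas [Rpower 0 a = 1]. *)
Definition natpow (d : nat) (a : R) : R := if d is 0%N then 0 else Rpower (INR d) a.

Lemma natpow_Rpower d a : (0 < d)%N -> natpow d a = Rpower (INR d) a.
Proof. by case: d. Qed.

Lemma natpow1 d : natpow d 1 = INR d.
Proof. by case: d => // d; rewrite natpow_Rpower // Rpower_1 //; apply: lt_0_INR; lia. Qed.

Lemma natpow_expn d k a : (0 < k)%N -> natpow (d ^ k) a = natpow d (INR k * a).
Proof.
move=> k_gt0; case: d => [|d]; first by rewrite exp0n.
have d_gt0 : 0 < INR d.+1 by apply: lt_0_INR; lia.
rewrite !natpow_Rpower ?expn_gt0 // INR_expn -Rpower_pow //.
by rewrite Rpower_mult Rmult_comm.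
Qed.

Lemma natpow_le_exponent d a b : a <= b -> natpow d a <= natpow d b.
Proof.
case: d => [|d] ab; first by rewrite /=; lra.
by rewrite !natpow_Rpower //; apply: Rle_Rpower => //; rewrite S_INR; have := pos_INR d; lra.
Qed.

Lemma natpow_le_tangent x mu th : 0 < mu -> 0 < th <= 1 ->
  natpow x th <= Rpower mu th * (1 - th) + Rpower mu th * th / mu * INR x.
Proof.
move=> mu_gt0 th01; have := Rpower_gt0 mu th.
case: x => [|x] pow_gt0.
  by rewrite /= Rmult_0_r Rplus_0_r; apply: Rmult_le_pos; lra.
rewrite natpow_Rpower //.
have xmu_gt0 : 0 < INR x.+1 / mu by apply: Rdiv_lt_0_compat => //; apply: lt_0_INR; lia.
have -> : INR x.+1 = INR x.+1 / mu * mu by field; lra.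
rewrite -Rpower_mult_distr //.
have := Rpower_le_tangent xmu_gt0 th01.
have -> : Rpower mu th * (1 - th) + Rpower mu th * th / mu * (INR x.+1 / mu * mu)
    = (1 + th * (INR x.+1 / mu - 1)) * Rpower mu th by field; lra.
by move=> le_tangent; apply: Rmult_le_compat_r; lra.
Qed.

Lemma sum_natpow_le (I : finType) (U : {set I}) (x : I -> nat) mu th :
  0 < mu -> 0 < th <= 1 -> INR (\sum_(v in U) x v) <= INR #|U| * mu ->
  \big[Rplus/0]_(v in U) natpow (x v) th <= INR #|U| * Rpower mu th.
Proof.
move=> mu_gt0 th01 sum_le.
apply: Rle_trans (rsum_le (fun v _ => natpow_le_tangent (x v) mu_gt0 th01)) _.
rewrite rsum_affine -INR_sum.
have pow_gt0 := Rpower_gt0 mu th.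
have dd_ge0 : 0 <= Rpower mu th * th / mu.
  by apply: Rmult_le_pos; [nra | apply: Rlt_le; apply: Rinv_0_lt_compat].
have := Rmult_le_compat_l _ _ _ dd_ge0 sum_le.
have -> : Rpower mu th * th / mu * (INR #|U| * mu) = INR #|U| * (Rpower mu th * th).
  by field; lra.
lra.
Qed.

End Powers.

Section CliqueBound.

Local Open Scope R_scope.

Definition clique_exponent (m s : nat) : R := INR m - INR m * (INR m - 1) / (2 * INR s).

Lemma clique_exponent1 s : clique_exponent 1 s = 1.
Proof. by rewrite /clique_exponent /= Rminus_diag Rmult_0_r /Rdiv Rmult_0_l Rminus_0_r. Qed.

Lemma clique_exponent_bounds m s : (0 < m)%N -> (m <= s)%N ->
  0 < clique_exponent m s <= INR m.
Proof.
move=> m_gt0 ms.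
have m_ge1 : 1 <= INR m by rewrite -/(INR 1); apply: le_INR; lia.
have ms_R : INR m <= INR s by apply: le_INR; lia.
have q_ge0 : 0 <= INR m * (INR m - 1) / (2 * INR s).
  by apply: Rmult_le_pos; [nra | apply: Rlt_le; apply: Rinv_0_lt_compat; lra].
have q_lt : INR m * (INR m - 1) / (2 * INR s) < INR m.
  apply: (Rmult_lt_reg_r (2 * INR s)); first lra.
  by rewrite /Rdiv Rmult_assoc Rinv_l; nra.
rewrite /clique_exponent; lra.
Qed.

Lemma clique_exponentS m s : (0 < s)%N ->
  1 + INR s * (clique_exponent m.+1 s / INR s.+1) = clique_exponent m.+2 s.+1.
Proof.
move=> s_gt0; have : 0 < INR s by apply: lt_0_INR; lia.
rewrite /clique_exponent !S_INR => s_pos; field; lra.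
Qed.

Lemma clique_exponent_le r s : (2 <= r)%N -> (r <= s)%N ->
  clique_exponent 2 s <= clique_exponent r s.
Proof.
move=> r2 rs.
have r_ge2 : 2 <= INR r by have /= := le_INR 2 r (leP r2); lra.
have rs_R : INR r <= INR s by apply: le_INR; lia.
have -> : clique_exponent r s
    = clique_exponent 2 s + (INR r - 2) * (2 * INR s - INR r - 1) / (2 * INR s).
  by rewrite /clique_exponent /=; field; lra.
have : 0 <= (INR r - 2) * (2 * INR s - INR r - 1) / (2 * INR s).
  by apply: Rmult_le_pos; [nra | apply: Rlt_le; apply: Rinv_0_lt_compat; lra].
lra.
Qed.

Lemma sum_natpow_nbhd_le (T : finType) (adj : rel T) s t (U : {set T}) th :
  0 < th <= 1 -> symmetric adj -> Kst_free adj s.+1 t U ->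
  \big[Rplus/0]_(v in U) natpow #|nbhd adj U v| (INR s.+1 * th)
    <= Rpower (INR (kst_const s.+1 t)) th * natpow #|U| (1 + INR s * th).
Proof.
move=> th01 sym Kfree.
have [/cards0_eq -> | U_gt0] := posnP #|U|.
  by rewrite big_set0 cards0 /= Rmult_0_r; lra.
set K := INR (kst_const s.+1 t).
have K_gt0 : 0 < K by apply: lt_0_INR; rewrite /kst_const; lia.
have N_gt0 : 0 < INR #|U| by apply: lt_0_INR; lia.
have Ns_gt0 : 0 < INR #|U| ^ s by apply: pow_lt.
under eq_bigr do rewrite -natpow_expn //.
apply: Rle_trans (sum_natpow_le (mu := K * INR #|U| ^ s) _ th01 _) _.
- exact: Rmult_lt_0_compat.
- apply: Rle_trans (le_INR _ _ (leP (sum_nbhd_expn_le (ltn0Sn s) sym Kfree))) _.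
  by rewrite mulnE mult_INR INR_expn /= -/K; apply: Req_le; ring.
rewrite natpow_Rpower // -Rpower_mult_distr // -(Rpower_pow _ _ N_gt0) Rpower_mult.
by rewrite Rpower_plus (Rpower_1 _ N_gt0); apply: Req_le; ring.
Qed.

Definition cliques_bounded (s t m : nat) (C a : R) := forall (T : finType) (adj : rel T) U,
  symmetric adj -> irreflexive adj -> Kst_free adj s t U ->
  INR #|cliques adj m U| <= C * natpow #|U| a.

Lemma cliques_bounded_step t m s C : (m.+1 <= s)%N -> 0 < C ->
  cliques_bounded s t m.+1 C (clique_exponent m.+1 s) ->
  cliques_bounded s.+1 t m.+2
    (C * Rpower (INR (kst_const s.+1 t)) (clique_exponent m.+1 s / INR s.+1))
    (clique_exponent m.+2 s.+1).
Proof.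
move=> ms C_gt0 bound T adj U sym irr Kfree.
set th := clique_exponent m.+1 s / INR s.+1.
have [e_gt0 e_le] := clique_exponent_bounds (ltn0Sn m) ms.
have ms_R : INR m.+1 < INR s.+1 by apply: lt_INR; lia.
have th01 : 0 < th <= 1.
  rewrite /th; split; first by apply: Rdiv_lt_0_compat; lra.
  by apply: (Rmult_le_reg_r (INR s.+1)); [lra | rewrite /Rdiv Rmult_assoc Rinv_l; lra].
apply: Rle_trans (le_INR _ _ (leP (card_cliquesS_le adj m.+1 U))) _.
rewrite INR_sum.
apply: Rle_trans (rsum_le (fun v vU => bound _ adj _ sym irr (Kst_free_nbhd irr vU Kfree))) _.
rewrite rsum_scale Rmult_assoc -(clique_exponentS m (leq_trans (ltn0Sn m) ms)) -/th.
apply: Rmult_le_compat_l; first lra.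
have -> : clique_exponent m.+1 s = INR s.+1 * th by rewrite /th; field; lra.
exact: sum_natpow_nbhd_le.
Qed.

Lemma cliques_bound t m s : (0 < m)%N -> (m <= s)%N ->
  exists2 C, 0 < C & cliques_bounded s t m C (clique_exponent m s).
Proof.
elim: m s => [|[|m] IH] [|s] // _ ms.
  exists 1; first lra.
  by move=> T adj U _ _ _; rewrite card_cliques1 clique_exponent1 natpow1; lra.
have [C C_gt0 bound] := IH s (ltn0Sn m) ms.
exists (C * Rpower (INR (kst_const s.+1 t)) (clique_exponent m.+1 s / INR s.+1)).
  by apply: Rmult_lt_0_compat => //; apply: Rpower_gt0.
exact: cliques_bounded_step.
Qed.

End CliqueBound.

Lemma Kst_edge_inj (X Y : finType) (i i' : X) (j j' : Y) :
  [set inl i; inr j] = [set inl i'; inr j'] :> {set X + Y} -> i = i' /\ j = j'.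
Proof.
move=> e; split.
  by have := set21 (inl i : X + Y) (inr j); rewrite e => /set2P [[]|//].
by have := set22 (inl i : X + Y) (inr j); rewrite e => /set2P [//|[]].
Qed.

Lemma set2_inj_disjoint (T : finType) (A B : {set T}) : [disjoint A & B] ->
  {in setX A B &, injective (fun p : T * T => [set p.1; p.2])}.
Proof.
move=> disAB [a b] [a' b'] /setXP [aA bB] /setXP [a'A b'B] /= e.
have notB x : x \in A -> x \in B = false by move=> xA; apply: disjointFr disAB xA.
have /set2P [ea | ea] : a \in [set a'; b'] by rewrite -e set21.
  have /set2P [eb | eb] : b \in [set a'; b'] by rewrite -e set22.
    by move: bB; rewrite eb notB.
  by rewrite ea eb.
by move: b'B; rewrite -ea notB.
Qed.

Section BergeKst.

Variables (n s t : nat) (H : {set {set 'I_n}}).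

Lemma has_berge_Kst (A B : {set 'I_n}) (h : 'I_n * 'I_n -> {set 'I_n}) :
  #|A| = s -> #|B| = t -> [disjoint A & B] ->
  {in setX A B, forall p, h p \in H /\ [set p.1; p.2] \subset h p} ->
  {in setX A B &, injective h} -> has_berge (Kst_edges s t) H.
Proof.
move=> cardA cardB disAB hH h_inj.
pose fa (i : 'I_s) := enum_val (cast_ord (esym cardA) i).
pose fb (j : 'I_t) := enum_val (cast_ord (esym cardB) j).
have fa_inj : injective fa by move=> i i' /enum_val_inj /cast_ord_inj.
have fb_inj : injective fb by move=> j j' /enum_val_inj /cast_ord_inj.
have AB i j : (fa i, fb j) \in setX A B by apply/setXP; split; apply: enum_valP.
pose phi : {ffun 'I_s + 'I_t -> 'I_n} :=
  [ffun x => match x with inl i => fa i | inr j => fb j end].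
pose ends (e : {set 'I_s + 'I_t}) := [pick p : 'I_s * 'I_t | e == [set inl p.1; inr p.2]].
have endsE i j : ends [set inl i; inr j] = Some (i, j).
  rewrite /ends; case: pickP => [[i' j'] /eqP /Kst_edge_inj [-> ->] // | /(_ (i, j))].
  by rewrite eqxx.
pose g : {ffun {set 'I_s + 'I_t} -> {set 'I_n}} :=
  [ffun e => if ends e is Some p then h (fa p.1, fb p.2) else set0].
have gE i j : g [set inl i; inr j] = h (fa i, fb j) by rewrite ffunE endsE.
apply/existsP; exists phi; apply/existsP; exists g; apply/and4P; split.
- apply/injectiveP => -[i|j] [i'|j']; rewrite !ffunE => e.
  + by rewrite (fa_inj _ _ e).
  + by have /setXP [/(disjointFr disAB)] := AB i j'; rewrite e => ->.
  + by have /setXP [/(disjointFr disAB)] := AB i' j; rewrite -e => ->.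
  + by rewrite (fb_inj _ _ e).
- apply/dinjectiveP => _ _ /imset2P [i j _ _ ->] /imset2P [i' j' _ _ ->].
  by rewrite !gE => /(h_inj _ _ (AB i j) (AB i' j')) [/fa_inj -> /fb_inj ->].
- by apply/forall_inP => _ /imset2P [i j _ _ ->]; rewrite gE; case: (hH _ (AB i j)).
- apply/forall_inP => _ /imset2P [i j _ _ ->].
  by rewrite gE imsetU1 imset_set1 !ffunE; case: (hH _ (AB i j)).
Qed.

Definition codegree (x y : 'I_n) := #|[set e in H | [set x; y] \subset e]|.

Definition fat (k : nat) (x y : 'I_n) := (x != y) && (k <= codegree x y).

Lemma fat_sym k : symmetric (fat k).
Proof. by move=> x y; rewrite /fat /codegree eq_sym setUC. Qed.

Lemma fat_irr k : irreflexive (fat k).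
Proof. by move=> x; rewrite /fat eqxx. Qed.

Hypothesis Berge_free : ~~ has_berge (Kst_edges s t) H.

Lemma fat_Kst_free : Kst_free (fat (s * t)) s t setT.
Proof.
move=> A B _ _ cardA cardB AB.
pose S (p : 'I_n * 'I_n) := [set e in H | [set p.1; p.2] \subset e].
have [|g gS g_inj] := distinct_representatives set0 (S := S) (I := setX A B).
  move=> [a b] /setXP [aA bB]; rewrite cardsX cardA cardB.
  by case/andP: (AB a b aA bB).
move/negP: Berge_free; apply; apply: (has_berge_Kst cardA cardB _ _ g_inj).
  exact: complete_bipartite_disjoint (@fat_irr _) AB.
by move=> p /gS /setIdP.
Qed.

Section NonEdges.

Variable adj : rel 'I_n.

Definition nonedge (e : {set 'I_n}) : {set 'I_n} :=
  if [pick p : 'I_n * 'I_n | [&& p.1 \in e, p.2 \in e, p.1 != p.2 & ~~ adj p.1 p.2]] is Some p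
  then [set p.1; p.2] else set0.

Definition nonclique_edges := [set e in H | ~~ clique adj e].

Definition nonedge_graph (x y : 'I_n) :=
  (x != y) && ([set x; y] \in nonedge @: nonclique_edges).

Lemma nonedgeP e : ~~ clique adj e ->
  exists x y, [/\ nonedge e = [set x; y], x \in e, y \in e, x != y & ~~ adj x y].
Proof.
move=> ncl; rewrite /nonedge; case: pickP => [[x y] /and4P [xe ye xy nxy] | none].
  by exists x, y.
case/negP: ncl; apply/cliqueP => x y xe ye xy; apply/negPn/negP => nxy.
by move: (none (x, y)); rewrite /= xe ye xy nxy.
Qed.

Lemma nonedge_sub e : ~~ clique adj e -> nonedge e \subset e.
Proof.
by case/nonedgeP => x [y [-> xe ye _ _]]; rewrite subUset !sub1set xe ye.
Qed.

Lemma nonedge_graph_sym : symmetric nonedge_graph.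
Proof. by move=> x y; rewrite /nonedge_graph eq_sym setUC. Qed.

Lemma nonedge_graph_irr : irreflexive nonedge_graph.
Proof. by move=> x; rewrite /nonedge_graph eqxx. Qed.

Lemma nonedge_graph_Kst_free : Kst_free nonedge_graph s t setT.
Proof.
move=> A B _ _ cardA cardB AB.
pose h (p : 'I_n * 'I_n) := odflt set0 [pick e in nonclique_edges | nonedge e == [set p.1; p.2]].
have hP p : p \in setX A B -> h p \in nonclique_edges /\ nonedge (h p) = [set p.1; p.2].
  case: p => a b /setXP [aA bB]; case/andP: (AB a b aA bB) => _ /imsetP [e eE eab].
  rewrite /h; case: pickP => [e' /andP [e'E /eqP e'ab] | /(_ e)]; first by split.
  by rewrite eE -eab eqxx.
have disAB := complete_bipartite_disjoint nonedge_graph_irr AB.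
move/negP: Berge_free; apply; apply: (has_berge_Kst (h := h) cardA cardB disAB).
  move=> p /hP [/setIdP [eH ncl] <-]; split=> //; exact: nonedge_sub.
move=> p q pAB qAB e; apply: (set2_inj_disjoint disAB pAB qAB) => /=.
by have [_ <-] := hP p pAB; have [_ <-] := hP q qAB; rewrite e.
Qed.

Lemma card_nonclique_edges_le k :
  (forall x y, x != y -> ~~ adj x y -> codegree x y <= k) ->
  #|nonclique_edges| <= k * #|cliques nonedge_graph 2 setT|.
Proof.
move=> thin; rewrite -sum1_card (partition_big_imset nonedge) /=.
apply: leq_trans (_ : \sum_(Q in nonedge @: nonclique_edges) k <= _).
  apply: leq_sum => _ /imsetP [e0 /setIdP [_ ncl0] ->].
  have [x [y [e0E _ _ xy nxy]]] := nonedgeP ncl0.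
  rewrite sum1dep_card; apply: leq_trans (thin x y xy nxy).
  apply: subset_leq_card; apply/subsetP => e; rewrite !inE => /andP [/andP [eH ncl] /eqP eE].
  by rewrite eH -e0E -eE nonedge_sub.
rewrite sum_nat_const mulnC leq_mul2l; apply/orP; right.
apply: subset_leq_card; apply/subsetP => _ /imsetP [e eE ->].
have /setIdP [_ ncl] := eE; have [x [y [exy _ _ xy _]]] := nonedgeP ncl.
have xyE : [set x; y] \in nonedge @: nonclique_edges by rewrite -exy; apply: imset_f.
rewrite exy inE subsetT cards2 xy; apply/cliqueP => u v.
move=> /set2P [] -> /set2P [] ->; rewrite ?eqxx // => _; rewrite /nonedge_graph.
  by rewrite xy xyE.
by rewrite eq_sym xy setUC xyE.
Qed.

End NonEdges.

Lemma card_uniform_le r : uniform r H ->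
  #|H| <= #|cliques (fat (s * t)) r setT|
          + s * t * #|cliques (nonedge_graph (fat (s * t))) 2 setT|.
Proof.
move=> Hr; set adj := fat (s * t).
have -> : H = [set e in H | clique adj e] :|: nonclique_edges adj.
  by apply/setP => e; rewrite !inE; case: (e \in H); case: (clique adj e).
apply: leq_trans (leq_card_setU _ _) (leq_add _ _).
  apply: subset_leq_card; apply/subsetP => e /setIdP [eH cl].
  by rewrite inE subsetT cl andbT; move/forall_inP: Hr; apply.
apply: card_nonclique_edges_le => x y xy.
by rewrite /adj /fat xy -ltnNge => /ltnW.
Qed.

End BergeKst.

Lemma ex_berge_leR r (V : finType) (E : {set {set V}}) n (b : R) : (0 <= b)%R ->
  (forall H : {set {set 'I_n}}, uniform r H -> ~~ has_berge E H -> (INR #|H| <= b)%R) ->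
  (INR (ex_berge r E n) <= b)%R.
Proof.
move=> b_ge0 bound.
apply: (big_ind (fun m => INR m <= b)%R) => [|x y bx by_ | H /andP []] //.
  by rewrite /maxn; case: ifP.
exact: bound.
Qed.

Theorem theorem1p6 (r s t : nat) :
  (3 <= r)%N -> (r <= s)%N -> (s <= t)%N ->
  exists (C : R) (N : nat), (0 < C)%R /\
    forall n : nat, (N <= n)%N ->
      (INR (ex_berge r (Kst_edges s t) n)
        <= C * Rpower (INR n) (INR r - INR r * (INR r - 1) / (2 * INR s)))%R.
Proof.
(* The bound does not need [s <= t]. *)
move=> r3 rs _.
have [C1 C1_gt0 bound_r] := cliques_bound t (ltnW (ltnW r3)) rs.
have [C2 C2_gt0 bound_2] := cliques_bound t (isT : (0 < 2)%N) (leq_trans (ltnW r3) rs).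
have C_gt0 : (0 < C1 + INR (s * t) * C2)%R by have := pos_INR (s * t); nra.
exists (C1 + INR (s * t) * C2)%R, 1%N; split => // n n_gt0.
change (INR r - _)%R with (clique_exponent r s).
have pow_gt0 := Rpower_gt0 (INR n) (clique_exponent r s).
apply: ex_berge_leR => [|H Hr Hfree]; first by apply: Rmult_le_pos; lra.
set fatH := fat H (s * t).
have c1 := bound_r _ fatH setT (fat_sym _ _) (fat_irr _ _) (fat_Kst_free Hfree).
have c2 := bound_2 _ (nonedge_graph H fatH) setT (nonedge_graph_sym _ _)
  (nonedge_graph_irr _ _) (nonedge_graph_Kst_free Hfree (adj := fatH)).
have e2r := natpow_le_exponent n (clique_exponent_le (ltnW r3) rs).
rewrite cardsT card_ord in c1 c2; rewrite natpow_Rpower // in c1 e2r.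
have thin : (INR (s * t) * INR #|cliques (nonedge_graph H fatH) 2 setT|
    <= INR (s * t) * (C2 * Rpower (INR n) (clique_exponent r s)))%R.
  by apply: Rmult_le_compat_l; [apply: pos_INR | nra].
have /leP/le_INR := card_uniform_le s t Hr; rewrite plus_INR mult_INR.
rewrite -/fatH; lra.
Qed.
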